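(* Let $T$ be a triangle. For every $\bm{p}_2\in\mathcal{P}_2(T)^2$ and every $w_2\in\mathcal{P}_2(T)$, $$\int_T(\bm{p}_2-\Pi_h^1\bm{p}_2)\cdot\nabla^\perp w_2=\sum_{k=1}^3\int_{e_k}\mathcal{B}_k(\bm{p}_2)\,\partial_{\bm{t}_k}^2w_2.$$
   Context: $T$ has vertices $\bm{z}_1,\bm{z}_2,\bm{z}_3$ ordered counterclockwise, indices mod 3; $e_k$ is the edge opposite $\bm{z}_k$, $\ell_k$ its length, $\bm{t}_k$ its unit tangent oriented counterclockwise along $\partial T$, $\bm{n}_k$ its unit outward normal; $d$ is the diameter of the circumscribed circle. $\nabla^\perp v=(-\partial_{x_2}v,\partial_{x_1}v)^\intercal$; directional derivatives act componentwise on vector fields. $\Pi_h^1\bm{q}\in\mathcal{RT}_1(T)=\{(v_1,v_2)^\intercal+v_3(x_1,x_2)^\intercal:v_i\in\mathcal{P}_1(T)\}$ is determined by $\int_e(\bm{q}-\Pi_h^1\bm{q})\cdot\bm{n}_ev=0$ for all $v\in\mathcal{P}_1(e)$ on each edge $e$ and $\int_T(\bm{q}-\Pi_h^1\bm{q})=\bm{0}$. Define $\mathcal{D}_{1,k}^{11}\bm{q}=\bm{t}_k\cdot\partial_{\bm{t}_k}^2\bm{q}$, $\mathcal{D}_{1,k}^{12}\bm{q}=\mathcal{D}_{1,k}^{21}\bm{q}=\bm{t}_k\cdot\partial_{\bm{t}_k}\partial_{\bm{n}_k}\bm{q}$, $\mathcal{D}_{1,k}^{22}\bm{q}=\bm{t}_k\cdot\partial_{\bm{n}_k}^2\bm{q}$,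 and $\mathcal{D}_{2,k}^{jl}$ the same with $\bm{t}_k\cdot$ replaced by $\bm{n}_k\cdot$. Coefficients: $\mu^1_{11,k}=\frac{1}{5760}\big(3\ell_k^4-3(\ell_{k-1}^2-\ell_{k+1}^2)^2-4\ell_k^2(\ell_{k-1}^2+\ell_{k+1}^2)\big)$; $\mu^1_{12,k}=\mu^1_{21,k}=\frac{\ell_1\ell_2\ell_3(\ell_{k-1}^2-\ell_{k+1}^2)}{1440d}$; $\mu^1_{22,k}=-\frac{\ell_1^2\ell_2^2\ell_3^2}{1440d^2}$; $\mu^2_{11,k}=\frac{d(\ell_{k-1}^2-\ell_{k+1}^2)\big(4\ell_k^4-(\ell_{k-1}^2-\ell_{k+1}^2)^2-3\ell_k^2(\ell_{k-1}^2+\ell_{k+1}^2)\big)}{2880\,\ell_1\ell_2\ell_3}$; $\mu^2_{12,k}=\mu^2_{21,k}=-\mu^1_{11,k}$; $\mu^2_{22,k}=-\mu^1_{12,k}$. $\mathcal{B}_k(\bm{q})=\sum_{i,j,l=1}^2\mu^i_{jl,k}\mathcal{D}^{jl}_{i,k}(\bm{q})$. *)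

From Stdlib Require Import Reals.
From Coquelicot Require Import Coquelicot.
Open Scope R_scope.

Definition pt := (R * R)%type.
Definition padd (x y : pt) : pt := (fst x + fst y, snd x + snd y).
Definition pscal (a : R) (x : pt) : pt := (a * fst x, a * snd x).
Definition psub (x y : pt) : pt := (fst x - fst y, snd x - snd y).
Definition dot (x y : pt) : R := fst x * fst y + snd x * snd y.
Definition pnorm (x : pt) : R := sqrt (dot x x).
Definition cross (x y : pt) : R := fst x * snd y - snd x * fst y.

Definition dder (v : pt) (f : pt -> R) (x : pt) : R :=
  Derive (fun s => f (padd x (pscal s v))) 0.
Definition vdder (v : pt) (F : pt -> pt) (x : pt) : pt :=
  (dder v (fun y => fst (F y)) x, dder v (fun y => snd (F y)) x).

Definition nabla_perp (w : pt -> R) (x : pt) : pt :=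
  (- dder (0, 1) w x, dder (1, 0) w x).

Definition is_P1 (f : pt -> R) : Prop :=
  exists a b c, forall x, f x = a + b * fst x + c * snd x.
Definition is_P2 (f : pt -> R) : Prop :=
  exists a0 a1 a2 a3 a4 a5, forall x,
    f x = a0 + a1 * fst x + a2 * snd x
          + a3 * fst x ^ 2 + a4 * fst x * snd x + a5 * snd x ^ 2.
Definition is_RT1 (F : pt -> pt) : Prop :=
  exists v1 v2 v3, is_P1 v1 /\ is_P1 v2 /\ is_P1 v3 /\
    forall x, F x = (v1 x + v3 x * fst x, v2 x + v3 x * snd x).

(** Vertices with indices mod 3: vtx 1 = z1, vtx 2 = z2, vtx 3 = vtx 0 = z3 *)
Definition vtx (z1 z2 z3 : pt) (k : nat) : pt :=
  match Nat.modulo k 3 with 1%nat => z1 | 2%nat => z2 | _ => z3 end.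
(** Edge e_k (opposite z_k) runs from z_{k+1} to z_{k+2} (counterclockwise) *)
Definition estart z1 z2 z3 k := vtx z1 z2 z3 (k + 1).
Definition eend z1 z2 z3 k := vtx z1 z2 z3 (k + 2).
Definition ell z1 z2 z3 k := pnorm (psub (eend z1 z2 z3 k) (estart z1 z2 z3 k)).
Definition tang z1 z2 z3 k : pt :=
  pscal (/ ell z1 z2 z3 k) (psub (eend z1 z2 z3 k) (estart z1 z2 z3 k)).
(** outward unit normal for a counterclockwise triangle *)
Definition nrm z1 z2 z3 k : pt := (snd (tang z1 z2 z3 k), - fst (tang z1 z2 z3 k)).

(** Integrals: edge integral w.r.t. arc length via the affine parametrization,
    triangle integral via the affine map from the reference triangle. *)
Definition seg (a b : pt) (t : R) : pt := padd a (pscal t (psub b a)).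
Definition edge_int (a b : pt) (f : pt -> R) : R :=
  pnorm (psub b a) * RInt (fun t => f (seg a b t)) 0 1.
Definition tri_int (z1 z2 z3 : pt) (f : pt -> R) : R :=
  Rabs (cross (psub z2 z1) (psub z3 z1)) *
  RInt (fun s => RInt (fun t =>
      f (padd z1 (padd (pscal s (psub z2 z1)) (pscal t (psub z3 z1))))) 0 (1 - s)) 0 1.

Definition is_P1_edge (a b : pt) (v : pt -> R) : Prop :=
  exists c0 c1, forall t, v (seg a b t) = c0 + c1 * t.

Section Coefs.
Variables (z1 z2 z3 : pt) (d : R) (k : nat).
Let lk := ell z1 z2 z3 k.
Let lm := ell z1 z2 z3 (k - 1).
Let lp := ell z1 z2 z3 (k + 1).
Let L := ell z1 z2 z3 1 * ell z1 z2 z3 2 * ell z1 z2 z3 3.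
Definition mu1_11 : R :=
  / 5760 * (3 * lk ^ 4 - 3 * (lm ^ 2 - lp ^ 2) ^ 2 - 4 * lk ^ 2 * (lm ^ 2 + lp ^ 2)).
Definition mu1_12 : R := L * (lm ^ 2 - lp ^ 2) / (1440 * d).
Definition mu1_21 : R := mu1_12.
Definition mu1_22 : R := - (L ^ 2 / (1440 * d ^ 2)).
Definition mu2_11 : R :=
  d * (lm ^ 2 - lp ^ 2) *
  (4 * lk ^ 4 - (lm ^ 2 - lp ^ 2) ^ 2 - 3 * lk ^ 2 * (lm ^ 2 + lp ^ 2)) / (2880 * L).
Definition mu2_12 : R := - mu1_11.
Definition mu2_21 : R := mu2_12.
Definition mu2_22 : R := - mu1_12.
End Coefs.

Definition Bop (z1 z2 z3 : pt) (d : R) (k : nat) (q : pt -> pt) (x : pt) : R :=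
  let t := tang z1 z2 z3 k in
  let n := nrm z1 z2 z3 k in
  let Dtt := vdder t (vdder t q) x in
  let Dtn := vdder t (vdder n q) x in
  let Dnt := vdder n (vdder t q) x in
  let Dnn := vdder n (vdder n q) x in
    mu1_11 z1 z2 z3 k * dot t Dtt + mu1_12 z1 z2 z3 d k * dot t Dtn
  + mu1_21 z1 z2 z3 d k * dot t Dnt + mu1_22 z1 z2 z3 d * dot t Dnn
  + mu2_11 z1 z2 z3 d k * dot n Dtt + mu2_12 z1 z2 z3 k * dot n Dtn
  + mu2_21 z1 z2 z3 k * dot n Dnt + mu2_22 z1 z2 z3 d k * dot n Dnn.

Definition rhs_term (z1 z2 z3 : pt) (d : R) (q : pt -> pt) (w : pt -> R) (k : nat) : R :=
  let t := tang z1 z2 z3 k in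
  edge_int (estart z1 z2 z3 k) (eend z1 z2 z3 k)
    (fun x => Bop z1 z2 z3 d k q x * dder t (dder t w) x).

(* Every quantity in the identity is polynomial: [p2 - Pi p2] is a quadratic vector field,
   [nabla_perp w2] is affine, and the second derivatives entering [B_k] and [d_t^2 w2] are
   constant.  Quadrature rules that are exact in these degrees turn both sides into polynomials
   in the vertices and the coefficients.  Multiplied by [(2|T|)^2], the left-hand side is the sum
   of the edge terms and of an explicit combination of the eight moments defining [Pi_h^1]
   (normal moments against [1] and the arc parameter on each edge, and the two interior means),
   all of which vanish for [p2 - Pi p2].  On the edge side, the circumcircle relation
   [l_1 l_2 l_3 = d * 2|T|] removes [d], after which the [mu]-combination is divisible by
   [l_k^4]; the quotient only involves the part of the Hessian of [p2] annihilated by [RT_1]. *)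

From Stdlib Require Import Reals Lra Lia FunctionalExtensionality.
From Coquelicot Require Import Coquelicot.
Open Scope R_scope.

Definition choose2 (x : R) : R := x * (x - 1) / 2.
Definition choose3 (x : R) : R := choose2 x * (x - 2) / 3.
Definition choose4 (x : R) : R := choose3 x * (x - 3) / 4.

(* Newton forward-difference interpolants at the integer nodes.  A polynomial of degree at most 4
   (resp. total degree at most 3) equals its interpolant; stated this way, the hypothesis of the
   quadrature lemmas below is checked by [field]. *)
Definition newton4 (g : R -> R) (t : R) : R :=
  g 0 + (g 1 - g 0) * t + (g 2 - 2 * g 1 + g 0) * choose2 t
  + (g 3 - 3 * g 2 + 3 * g 1 - g 0) * choose3 t
  + (g 4 - 4 * g 3 + 6 * g 2 - 4 * g 1 + g 0) * choose4 t.

Definition interval_sum (g : R -> R) : R :=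
  251 * g 0 + 646 * g 1 - 264 * g 2 + 106 * g 3 - 19 * g 4.

Lemma RInt_antiderivative (f F : R -> R) (a b : R) :
  (forall x, is_derive F x (f x)) -> (forall x, continuous f x) ->
  RInt f a b = F b - F a :> R.
Proof.
  intros HF Hf. apply is_RInt_unique, (is_RInt_derive F f); intros x _; auto.
Qed.

Lemma RInt_newton4 (g : R -> R) :
  (forall t, g t = newton4 g t) -> RInt g 0 1 = interval_sum g / 720 :> R.
Proof.
  intro Hg. rewrite (RInt_ext _ (newton4 g)) by (intros; apply Hg).
  unfold newton4, interval_sum, choose4, choose3, choose2.
  generalize (g 0) (g 1) (g 2) (g 3) (g 4); intros g0 g1 g2 g3 g4.
  rewrite (RInt_antiderivative _ (fun t => g0 * t + (g1 - g0) * t ^ 2 / 2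
      + (g2 - 2 * g1 + g0) * (t ^ 3 / 3 - t ^ 2 / 2) / 2
      + (g3 - 3 * g2 + 3 * g1 - g0) * (t ^ 4 / 4 - t ^ 3 + t ^ 2) / 6
      + (g4 - 4 * g3 + 6 * g2 - 4 * g1 + g0)
        * (t ^ 5 / 5 - 3 * t ^ 4 / 2 + 11 * t ^ 3 / 3 - 3 * t ^ 2) / 24)).
  - field.
  - intro t. auto_derive; [trivial | field].
  - intro t. apply (ex_derive_continuous (K := R_AbsRing) (V := R_NormedModule)).
    auto_derive. trivial.
Qed.

Definition newton_tri3 (F : R -> R -> R) (s t : R) : R :=
  F 0 0 + (F 1 0 - F 0 0) * s + (F 0 1 - F 0 0) * t
  + (F 2 0 - 2 * F 1 0 + F 0 0) * choose2 s
  + (F 1 1 - F 1 0 - F 0 1 + F 0 0) * s * t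
  + (F 0 2 - 2 * F 0 1 + F 0 0) * choose2 t
  + (F 3 0 - 3 * F 2 0 + 3 * F 1 0 - F 0 0) * choose3 s
  + (F 2 1 - 2 * F 1 1 + F 0 1 - F 2 0 + 2 * F 1 0 - F 0 0) * choose2 s * t
  + (F 1 2 - 2 * F 1 1 + F 1 0 - F 0 2 + 2 * F 0 1 - F 0 0) * s * choose2 t
  + (F 0 3 - 3 * F 0 2 + 3 * F 0 1 - F 0 0) * choose3 t.

Definition triangle_sum (F : R -> R -> R) : R :=
  76 * F 0 0 + 171 * (F 1 0 + F 0 1) + 66 * F 1 1 - 69 * (F 2 0 + F 0 2)
  - 9 * (F 2 1 + F 1 2) + 16 * (F 3 0 + F 0 3).

Lemma RInt_newton_tri3 (F : R -> R -> R) :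
  (forall s t, F s t = newton_tri3 F s t) ->
  RInt (fun s => RInt (fun t => F s t) 0 (1 - s)) 0 1 = triangle_sum F / 720 :> R.
Proof.
  intro HF.
  rewrite (RInt_ext _ (fun s => RInt (newton_tri3 F s) 0 (1 - s)))
    by (intros; apply RInt_ext; intros; apply HF).
  unfold newton_tri3, triangle_sum.
  generalize (F 0 0) (F 1 0) (F 0 1) (F 2 0) (F 1 1) (F 0 2) (F 3 0) (F 2 1) (F 1 2) (F 0 3).
  intros f00 f10 f01 f20 f11 f02 f30 f21 f12 f03.
  set (A := fun s t => f00 * t + (f10 - f00) * s * t + (f01 - f00) * t ^ 2 / 2
    + (f20 - 2 * f10 + f00) * choose2 s * t + (f11 - f10 - f01 + f00) * s * t ^ 2 / 2
    + (f02 - 2 * f01 + f00) * (t ^ 3 / 3 - t ^ 2 / 2) / 2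
    + (f30 - 3 * f20 + 3 * f10 - f00) * choose3 s * t
    + (f21 - 2 * f11 + f01 - f20 + 2 * f10 - f00) * choose2 s * t ^ 2 / 2
    + (f12 - 2 * f11 + f10 - f02 + 2 * f01 - f00) * s * (t ^ 3 / 3 - t ^ 2 / 2) / 2
    + (f03 - 3 * f02 + 3 * f01 - f00) * (t ^ 4 / 4 - t ^ 3 + t ^ 2) / 6).
  rewrite (RInt_ext _ (fun s => A s (1 - s))).
  2:{ intros s _. rewrite (RInt_antiderivative _ (A s)).
      - replace (A s 0) with 0 by (unfold A; field). apply Rminus_0_r.
      - intro t. unfold A, choose3, choose2. auto_derive; [trivial | field].
      - intro t. apply (ex_derive_continuous (K := R_AbsRing) (V := R_NormedModule)).
        unfold A, choose3, choose2. auto_derive. trivial. }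
  rewrite RInt_newton4.
  - unfold interval_sum, A, choose3, choose2. field.
  - intro s. unfold newton4, A, choose4, choose3, choose2. field.
Qed.

Record quadratic := Quadratic { cst : R; cx : R; cy : R; cxx : R; cxy : R; cyy : R }.

Definition qeval (c : quadratic) (y : pt) : R :=
  cst c + cx c * fst y + cy c * snd y
  + cxx c * fst y ^ 2 + cxy c * fst y * snd y + cyy c * snd y ^ 2.

Definition qgrad (c : quadratic) (y : pt) : pt :=
  (cx c + 2 * cxx c * fst y + cxy c * snd y, cy c + cxy c * fst y + 2 * cyy c * snd y).

Definition qhess (c : quadratic) (u v : pt) : R :=
  2 * cxx c * fst u * fst v + cxy c * (fst u * snd v + snd u * fst v)
  + 2 * cyy c * snd u * snd v.

Definition qsub (c c' : quadratic) : quadratic :=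
  Quadratic (cst c - cst c') (cx c - cx c') (cy c - cy c')
    (cxx c - cxx c') (cxy c - cxy c') (cyy c - cyy c').

Lemma P2_quadratic (f : pt -> R) (o : pt) :
  is_P2 f -> exists c, forall x, f x = qeval c (psub x o).
Proof.
  intros [a0 [a1 [a2 [a3 [a4 [a5 Hf]]]]]].
  exists (Quadratic (f o) (a1 + 2 * a3 * fst o + a4 * snd o) (a2 + a4 * fst o + 2 * a5 * snd o)
            a3 a4 a5).
  intro x. rewrite !Hf. unfold qeval, psub. simpl. ring.
Qed.

Definition rt1_hessians (A1 A2 : quadratic) : Prop :=
  cxx A1 = cxy A2 /\ cxy A1 = cyy A2 /\ cyy A1 = 0 /\ cxx A2 = 0.

Lemma RT1_quadratic (F : pt -> pt) (o : pt) :
  is_RT1 F -> exists A1 A2, rt1_hessians A1 A2 /\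
    forall x, F x = (qeval A1 (psub x o), qeval A2 (psub x o)).
Proof.
  intros [v1 [v2 [v3 [[a0 [a1 [a2 H1]]] [[b0 [b1 [b2 H2]]] [[g0 [g1 [g2 H3]]] HF]]]]]].
  set (g := v3 o).
  exists (Quadratic (fst (F o)) (a1 + g + g1 * fst o) (a2 + g2 * fst o) g1 g2 0),
    (Quadratic (snd (F o)) (b1 + g1 * snd o) (b2 + g + g2 * snd o) 0 g1 g2).
  split; [repeat split; reflexivity |].
  intro x. rewrite !HF. unfold qeval, psub, g. simpl. rewrite !H1, !H2, !H3. f_equal; ring.
Qed.

Lemma dder_quadratic (f : pt -> R) (c : quadratic) (o : pt) :
  (forall x, f x = qeval c (psub x o)) ->
  forall v x, dder v f x = dot (qgrad c (psub x o)) v.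
Proof.
  intros Hf v x. unfold dder.
  rewrite (Derive_ext _ (fun s => qeval c (psub (padd x (pscal s v)) o))) by (intro; apply Hf).
  apply is_derive_unique. unfold qeval, qgrad, dot, psub, padd, pscal. simpl.
  auto_derive; [trivial | ring].
Qed.

Lemma dder2_quadratic (f : pt -> R) (c : quadratic) (o : pt) :
  (forall x, f x = qeval c (psub x o)) ->
  forall u v x, dder u (dder v f) x = qhess c u v.
Proof.
  intros Hf u v x.
  rewrite (dder_quadratic _ (Quadratic (cx c * fst v + cy c * snd v)
                               (2 * cxx c * fst v + cxy c * snd v)
                               (cxy c * fst v + 2 * cyy c * snd v) 0 0 0) o).
  - unfold qhess, qgrad, dot. simpl. ring.
  - intro y. rewrite (dder_quadratic f c o Hf). unfold qeval, qgrad, dot. simpl. ring.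
Qed.

Lemma vdder2_quadratic (F : pt -> pt) (c1 c2 : quadratic) (o : pt) :
  (forall x, fst (F x) = qeval c1 (psub x o)) -> (forall x, snd (F x) = qeval c2 (psub x o)) ->
  forall u v x, vdder u (vdder v F) x = (qhess c1 u v, qhess c2 u v).
Proof.
  intros H1 H2 u v x. unfold vdder at 1. simpl.
  f_equal; [apply (dder2_quadratic _ c1 o H1) | apply (dder2_quadratic _ c2 o H2)].
Qed.

Definition rot_cw (u : pt) : pt := (snd u, - fst u).
Definition perp (u : pt) : pt := (- snd u, fst u).

Definition edge_vec (z1 z2 z3 : pt) (k : nat) : pt :=
  psub (eend z1 z2 z3 k) (estart z1 z2 z3 k).
Definition apex (z1 z2 z3 : pt) (k : nat) : pt := psub (vtx z1 z2 z3 k) (estart z1 z2 z3 k).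

Lemma dot_self_nonneg (u : pt) : 0 <= dot u u.
Proof. unfold dot. nra. Qed.

Lemma dot_self_pos (u v : pt) : 0 < cross u v -> 0 < dot u u.
Proof.
  destruct u as [u1 u2], v as [v1 v2]. unfold cross, dot. simpl. intro H.
  assert (Lagrange : (u1 * v2 - u2 * v1) ^ 2 + (u1 * v1 + u2 * v2) ^ 2
                     = (u1 * u1 + u2 * u2) * (v1 * v1 + v2 * v2)) by ring.
  apply Rnot_le_lt. intro Hu.
  assert (Hu0 : u1 * u1 + u2 * u2 = 0)
    by (pose proof (Rle_0_sqr u1); pose proof (Rle_0_sqr u2); unfold Rsqr in *; lra).
  rewrite Hu0, Rmult_0_l in Lagrange.
  pose proof (pow_lt _ 2 H). pose proof (pow2_ge_0 (u1 * v1 + u2 * v2)). lra.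
Qed.

Lemma ell_sq (z1 z2 z3 : pt) (k : nat) :
  ell z1 z2 z3 k ^ 2 = dot (edge_vec z1 z2 z3 k) (edge_vec z1 z2 z3 k).
Proof. apply pow2_sqrt, dot_self_nonneg. Qed.

Lemma nrm_rot_cw (z1 z2 z3 : pt) (k : nat) :
  nrm z1 z2 z3 k = pscal (/ ell z1 z2 z3 k) (rot_cw (edge_vec z1 z2 z3 k)).
Proof. unfold nrm, tang, rot_cw, pscal. simpl. f_equal. ring. Qed.

Lemma cross_edge_apex (z1 z2 z3 : pt) (k : nat) : (1 <= k <= 3)%nat ->
  cross (edge_vec z1 z2 z3 k) (apex z1 z2 z3 k) = cross (psub z2 z1) (psub z3 z1).
Proof.
  intro Hk. unfold edge_vec, apex, estart, eend, vtx.
  destruct k as [|[|[|[|]]]]; try lia; simpl; unfold cross, psub; simpl; ring.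
Qed.

Lemma ell_prev_sq (z1 z2 z3 : pt) (k : nat) : (1 <= k <= 3)%nat ->
  ell z1 z2 z3 (k - 1) ^ 2 = dot (apex z1 z2 z3 k) (apex z1 z2 z3 k).
Proof.
  intro Hk. rewrite ell_sq. unfold edge_vec, apex, estart, eend, vtx.
  destruct k as [|[|[|[|]]]]; try lia; simpl; unfold dot, psub; simpl; ring.
Qed.

Lemma ell_next_sq (z1 z2 z3 : pt) (k : nat) : (1 <= k <= 3)%nat ->
  ell z1 z2 z3 (k + 1) ^ 2
  = dot (psub (apex z1 z2 z3 k) (edge_vec z1 z2 z3 k))
        (psub (apex z1 z2 z3 k) (edge_vec z1 z2 z3 k)).
Proof.
  intro Hk. rewrite ell_sq. unfold edge_vec, apex, estart, eend, vtx.
  destruct k as [|[|[|[|]]]]; try lia; simpl; unfold dot, psub; simpl; ring.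
Qed.

Lemma ell_pos (z1 z2 z3 : pt) (k : nat) : (1 <= k <= 3)%nat ->
  0 < cross (psub z2 z1) (psub z3 z1) -> 0 < ell z1 z2 z3 k.
Proof.
  intros Hk H. rewrite <- (cross_edge_apex _ _ _ _ Hk) in H.
  apply sqrt_lt_R0, (dot_self_pos _ _ H).
Qed.

Lemma circumcenter_identity (a1 a2 b1 b2 u1 u2 : R) :
  2 * (a1 * u1 + a2 * u2) = a1 * a1 + a2 * a2 ->
  2 * (b1 * u1 + b2 * u2) = b1 * b1 + b2 * b2 ->
  (a1 * a1 + a2 * a2) * (b1 * b1 + b2 * b2) * ((b1 - a1) ^ 2 + (b2 - a2) ^ 2)
  = 4 * (a1 * b2 - a2 * b1) ^ 2 * (u1 * u1 + u2 * u2).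
Proof.
  intros Ha Hb.
  assert (E1 : 2 * (a1 * b2 - a2 * b1) * u1
               = (a1 * a1 + a2 * a2) * b2 - (b1 * b1 + b2 * b2) * a2)
    by (rewrite <- Ha, <- Hb; ring).
  assert (E2 : 2 * (a1 * b2 - a2 * b1) * u2
               = (b1 * b1 + b2 * b2) * a1 - (a1 * a1 + a2 * a2) * b1)
    by (rewrite <- Ha, <- Hb; ring).
  replace (4 * (a1 * b2 - a2 * b1) ^ 2 * (u1 * u1 + u2 * u2))
    with ((2 * (a1 * b2 - a2 * b1) * u1) ^ 2 + (2 * (a1 * b2 - a2 * b1) * u2) ^ 2) by ring.
  rewrite E1, E2. ring.
Qed.

Lemma pnorm_sq (u : pt) : pnorm u ^ 2 = dot u u.
Proof. apply pow2_sqrt, dot_self_nonneg. Qed.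

Lemma equidistant_dot (x o c : pt) :
  pnorm (psub x c) = pnorm (psub o c) ->
  2 * dot (psub x o) (psub c o) = dot (psub x o) (psub x o).
Proof.
  intro H. apply (f_equal (fun r => r ^ 2)) in H. rewrite !pnorm_sq in H.
  destruct x, o, c. unfold dot, psub in *. simpl in *. lra.
Qed.

Lemma ell_prod_circumdiameter (z1 z2 z3 : pt) (d : R) :
  0 < cross (psub z2 z1) (psub z3 z1) ->
  (exists c : pt, pnorm (psub z2 c) = pnorm (psub z1 c) /\
                  pnorm (psub z3 c) = pnorm (psub z1 c) /\ d = 2 * pnorm (psub z1 c)) ->
  ell z1 z2 z3 1 * ell z1 z2 z3 2 * ell z1 z2 z3 3 = d * cross (psub z2 z1) (psub z3 z1)
  /\ 0 < d.
Proof.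
  intros Hcr [c [H2 [H3 Hd]]].
  assert (Hl : 0 < ell z1 z2 z3 1 * ell z1 z2 z3 2 * ell z1 z2 z3 3)
    by (repeat apply Rmult_lt_0_compat; apply ell_pos; auto; lia).
  assert (Hsq : (ell z1 z2 z3 1 * ell z1 z2 z3 2 * ell z1 z2 z3 3) ^ 2
                = (d * cross (psub z2 z1) (psub z3 z1)) ^ 2).
  { apply equidistant_dot in H2, H3.
    rewrite !Rpow_mult_distr, !ell_sq, Hd, Rpow_mult_distr, pnorm_sq.
    destruct z1 as [o1 o2], z2 as [x2 y2], z3 as [x3 y3], c as [c1 c2].
    unfold edge_vec, estart, eend, vtx, cross, dot, psub in *. simpl in *.
    pose proof (circumcenter_identity _ _ _ _ _ _ H2 H3) as E. lra. }
  assert (Hd0 : 0 <= d).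
  { rewrite Hd. pose proof (sqrt_pos (dot (psub z1 c) (psub z1 c))). unfold pnorm. lra. }
  assert (E : ell z1 z2 z3 1 * ell z1 z2 z3 2 * ell z1 z2 z3 3
              = d * cross (psub z2 z1) (psub z3 z1)).
  { rewrite <- !Rsqr_pow2 in Hsq. apply Rsqr_inj; [lra | apply Rmult_le_pos; lra | exact Hsq]. }
  split; [exact E |].
  rewrite E in Hl. destruct Hd0 as [| <-]; [assumption | lra].
Qed.

Definition sum3 (f : nat -> R) : R := f 1%nat + f 2%nat + f 3%nat.

(* [720 * 2|T| * B_k / l_k] for the edge vector [D] of [e_k] and [P = z_k - z_(k+1)]; it is the
   exact quotient of [bterm_numerator] by [8 l_k^4] (see [bterm_numerator_factor]). *)
Definition bterm (D P : pt) (Q1 Q2 : quadratic) : R :=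
  let d1 := fst D in let d2 := snd D in let p1 := fst P in let p2 := snd P in
  let alpha :=
    - d1 ^ 4 * p2 - 4 * d1 ^ 3 * d2 * p1 + 5 * d1 ^ 3 * p1 * p2 - 3 * d1 ^ 2 * d2 ^ 2 * p2
    + 10 * d1 ^ 2 * d2 * p1 ^ 2 + 6 * d1 ^ 2 * d2 * p2 ^ 2 - 5 * d1 ^ 2 * p1 ^ 2 * p2
    - 2 * d1 ^ 2 * p2 ^ 3 - 2 * d1 * d2 ^ 3 * p1 + 8 * d1 * d2 ^ 2 * p1 * p2
    - 5 * d1 * d2 * p1 ^ 3 - 6 * d1 * d2 * p1 * p2 ^ 2 + d2 ^ 3 * p1 ^ 2
    - 2 * d2 ^ 2 * p1 ^ 2 * p2 in
  let beta :=
    - 2 * d1 ^ 3 * d2 * p2 + d1 ^ 3 * p2 ^ 2 - 3 * d1 ^ 2 * d2 ^ 2 * p1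
    + 8 * d1 ^ 2 * d2 * p1 * p2 - 2 * d1 ^ 2 * p1 * p2 ^ 2 - 4 * d1 * d2 ^ 3 * p2
    + 6 * d1 * d2 ^ 2 * p1 ^ 2 + 10 * d1 * d2 ^ 2 * p2 ^ 2 - 6 * d1 * d2 * p1 ^ 2 * p2
    - 5 * d1 * d2 * p2 ^ 3 - d2 ^ 4 * p1 + 5 * d2 ^ 3 * p1 * p2 - 2 * d2 ^ 2 * p1 ^ 3
    - 5 * d2 ^ 2 * p1 * p2 ^ 2 in
  let gamma :=
    - 3 * d1 ^ 2 * d2 ^ 2 * p2 + 3 * d1 ^ 2 * d2 * p2 ^ 2 - d1 ^ 2 * p2 ^ 3
    - 2 * d1 * d2 ^ 3 * p1 + 9 * d1 * d2 ^ 2 * p1 * p2 - 3 * d1 * d2 * p1 * p2 ^ 2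
    - 5 * d2 ^ 4 * p2 + 3 * d2 ^ 3 * p1 ^ 2 + 15 * d2 ^ 3 * p2 ^ 2 - 6 * d2 ^ 2 * p1 ^ 2 * p2
    - 10 * d2 ^ 2 * p2 ^ 3 in
  let delta :=
    5 * d1 ^ 4 * p1 + 2 * d1 ^ 3 * d2 * p2 - 15 * d1 ^ 3 * p1 ^ 2 - 3 * d1 ^ 3 * p2 ^ 2
    + 3 * d1 ^ 2 * d2 ^ 2 * p1 - 9 * d1 ^ 2 * d2 * p1 * p2 + 10 * d1 ^ 2 * p1 ^ 3
    + 6 * d1 ^ 2 * p1 * p2 ^ 2 - 3 * d1 * d2 ^ 2 * p1 ^ 2 + 3 * d1 * d2 * p1 ^ 2 * p2
    + d2 ^ 2 * p1 ^ 3 in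
  alpha * (cxx Q1 - cxy Q2) + beta * (cxy Q1 - cyy Q2) + gamma * cyy Q1 + delta * cxx Q2.

Lemma bterm_rt1 (D P : pt) (P1 P2 A1 A2 : quadratic) :
  rt1_hessians A1 A2 -> bterm D P (qsub P1 A1) (qsub P2 A2) = bterm D P P1 P2.
Proof.
  intros (E1 & E2 & E3 & E4). unfold bterm, qsub. simpl. rewrite E1, E2, E3, E4. ring.
Qed.

Section Quadratures.
Variables (z1 z2 z3 : pt) (Q1 Q2 W : quadratic).

Local Notation cr := (cross (psub z2 z1) (psub z3 z1)).
Local Notation D := (edge_vec z1 z2 z3).
Local Notation P := (apex z1 z2 z3).

Definition qfield (x : pt) : pt := (qeval Q1 (psub x z1), qeval Q2 (psub x z1)).

Definition ref_map (s t : R) : pt :=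
  padd z1 (padd (pscal s (psub z2 z1)) (pscal t (psub z3 z1))).

Definition edge_moment (j k : nat) : R :=
  interval_sum (fun t =>
    dot (qfield (seg (estart z1 z2 z3 k) (eend z1 z2 z3 k) t)) (rot_cw (D k)) * t ^ j).

Definition mean_sum : pt :=
  (triangle_sum (fun s t => fst (qfield (ref_map s t))),
   triangle_sum (fun s t => snd (qfield (ref_map s t)))).

Definition curl_sum : R :=
  triangle_sum (fun s t => dot (qfield (ref_map s t)) (perp (qgrad W (psub (ref_map s t) z1)))).

(* The multipliers of the moments in [curl_sum_decomposition], the unique ones for which the
   coefficients of [Pi] cancel.  In [interior_weight], the sum of the vertex gradients is three
   times the gradient at the centroid. *)
Definition edge_weight0 (k : nat) : R :=
  3 * qhess W (P k) (rot_cw (P k)) + 4 * qhess W (D k) (rot_cw (P k))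
  - qhess W (P k) (rot_cw (D k)) - 2 * qhess W (D k) (rot_cw (D k)).

Definition edge_weight1 (k : nat) : R :=
  6 * qhess W (D k) (rot_cw (D k)) - 11 * qhess W (D k) (rot_cw (P k))
  - qhess W (P k) (rot_cw (D k)).

Definition interior_weight : pt :=
  padd (pscal (5 * cr) (perp (padd (padd (qgrad W (psub z1 z1)) (qgrad W (psub z2 z1)))
                                   (qgrad W (psub z3 z1)))))
    (padd (padd (pscal (qhess W (D 1%nat) (rot_cw (D 1%nat))) (rot_cw (D 1%nat)))
                (pscal (qhess W (D 2%nat) (rot_cw (D 2%nat))) (rot_cw (D 2%nat))))
          (pscal (qhess W (D 3%nat) (rot_cw (D 3%nat))) (rot_cw (D 3%nat)))).

End Quadratures.

Lemma curl_sum_decomposition (z1 z2 z3 : pt) (Q1 Q2 W : quadratic) :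
  let cr := cross (psub z2 z1) (psub z3 z1) in
  let D := edge_vec z1 z2 z3 in
  let P := apex z1 z2 z3 in
  60 * cr ^ 2 * curl_sum z1 z2 z3 Q1 Q2 W
  = 60 * sum3 (fun k => bterm (D k) (P k) Q1 Q2 * qhess W (D k) (D k))
    + cr * (sum3 (fun k => edge_weight0 z1 z2 z3 W k * edge_moment z1 z2 z3 Q1 Q2 0 k
                           + edge_weight1 z1 z2 z3 W k * edge_moment z1 z2 z3 Q1 Q2 1 k)
            + 4 * dot (interior_weight z1 z2 z3 W) (mean_sum z1 z2 z3 Q1 Q2)).
Proof.
  (* Translating before unfolding keeps both the substitution and [ring]'s normal forms small. *)
  destruct z1 as [o1 o2], z2 as [x2 y2], z3 as [x3 y3].
  assert (exists a1, x2 = o1 + a1) as [a1 ->] by (exists (x2 - o1); ring).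
  assert (exists a2, y2 = o2 + a2) as [a2 ->] by (exists (y2 - o2); ring).
  assert (exists b1, x3 = o1 + b1) as [b1 ->] by (exists (x3 - o1); ring).
  assert (exists b2, y3 = o2 + b2) as [b2 ->] by (exists (y3 - o2); ring).
  unfold sum3, curl_sum, mean_sum, edge_moment, edge_weight0, edge_weight1, interior_weight,
    bterm, triangle_sum, interval_sum, ref_map, qfield, seg, edge_vec, apex,
    estart, eend, vtx, qeval, qgrad, qhess, rot_cw, perp, cross, dot, psub, padd, pscal.
  cbn [Nat.modulo Nat.divmod Nat.add Nat.sub fst snd]. ring.
Qed.

Lemma interval_sum_scal (c : R) (g : R -> R) :
  interval_sum (fun t => c * g t) = c * interval_sum g.
Proof. unfold interval_sum. ring. Qed.

Lemma normal_moment_zero (a b : pt) (q : pt -> pt) (j : nat) :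
  0 < pnorm (psub b a) -> (j <= 1)%nat ->
  (forall v, is_P1_edge a b v ->
     edge_int a b
       (fun x => dot (q x) (pscal (/ pnorm (psub b a)) (rot_cw (psub b a))) * v x) = 0) ->
  let g t := dot (q (seg a b t)) (rot_cw (psub b a)) * t ^ j in
  (forall t, g t = newton4 g t) -> interval_sum g = 0.
Proof.
  intros Hl Hj Hq g Hg.
  set (L := pnorm (psub b a)) in *.
  assert (HQ : 0 < dot (psub b a) (psub b a)) by (rewrite <- pnorm_sq; apply pow_lt, Hl).
  set (v x := (dot (psub x a) (psub b a) / dot (psub b a) (psub b a)) ^ j).
  assert (Hv : forall t, v (seg a b t) = t ^ j).
  { intro t. unfold v. f_equal. unfold seg, dot, psub, padd, pscal in *. simpl in *. field. lra. }
  assert (Hw : is_P1_edge a b v).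
  { destruct j as [|[|]]; [exists 1, 0 | exists 0, 1 | lia]; intro t; rewrite Hv; ring. }
  specialize (Hq v Hw). unfold edge_int in Hq. fold L in Hq.
  rewrite (RInt_ext _ (fun t => / L * g t)) in Hq.
  2:{ intros t _. rewrite Hv. unfold g, dot, pscal. simpl. ring. }
  rewrite RInt_newton4, interval_sum_scal in Hq.
  - apply Rmult_integral in Hq as [H | H]; [lra |].
    replace (interval_sum g) with (L * 720 * (/ L * interval_sum g / 720)) by (field; lra).
    rewrite H. ring.
  - intro t. rewrite (Hg t) at 1. unfold newton4. ring.
Qed.

Lemma tri_int_ext (z1 z2 z3 : pt) (f g : pt -> R) :
  (forall x, f x = g x) -> tri_int z1 z2 z3 f = tri_int z1 z2 z3 g.
Proof. intro H. apply functional_extensionality in H. rewrite H. reflexivity. Qed.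

Lemma tri_int_rule (z1 z2 z3 : pt) (f : pt -> R) :
  0 < cross (psub z2 z1) (psub z3 z1) ->
  (forall s t, f (ref_map z1 z2 z3 s t)
               = newton_tri3 (fun s t => f (ref_map z1 z2 z3 s t)) s t) ->
  tri_int z1 z2 z3 f
  = cross (psub z2 z1) (psub z3 z1)
    * (triangle_sum (fun s t => f (ref_map z1 z2 z3 s t)) / 720).
Proof.
  intros Hcr Hf. unfold tri_int. rewrite Rabs_pos_eq by lra. f_equal.
  exact (RInt_newton_tri3 (fun s t => f (ref_map z1 z2 z3 s t)) Hf).
Qed.

Lemma triangle_sum_zero (z1 z2 z3 : pt) (f : pt -> R) :
  0 < cross (psub z2 z1) (psub z3 z1) ->
  (forall s t, f (ref_map z1 z2 z3 s t)
               = newton_tri3 (fun s t => f (ref_map z1 z2 z3 s t)) s t) ->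
  tri_int z1 z2 z3 f = 0 -> triangle_sum (fun s t => f (ref_map z1 z2 z3 s t)) = 0.
Proof.
  intros Hcr Hf H. rewrite tri_int_rule in H by assumption.
  apply Rmult_integral in H as [H | H]; lra.
Qed.

Lemma nabla_perp_quadratic (w : pt -> R) (c : quadratic) (o : pt) :
  (forall x, w x = qeval c (psub x o)) -> forall x, nabla_perp w x = perp (qgrad c (psub x o)).
Proof.
  intros Hw x. unfold nabla_perp, perp.
  rewrite !(dder_quadratic w c o Hw). unfold dot. simpl. f_equal; ring.
Qed.

Section Pi_moments.
Variables (z1 z2 z3 : pt) (Q1 Q2 W : quadratic) (q : pt -> pt) (w : pt -> R).
Hypothesis Hcr : 0 < cross (psub z2 z1) (psub z3 z1).
Hypothesis Hq : forall x, q x = qfield z1 Q1 Q2 x.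
Hypothesis Hw : forall x, w x = qeval W (psub x z1).

Lemma tri_int_curl :
  tri_int z1 z2 z3 (fun x => dot (q x) (nabla_perp w x))
  = cross (psub z2 z1) (psub z3 z1) * (curl_sum z1 z2 z3 Q1 Q2 W / 720).
Proof.
  rewrite (tri_int_ext _ _ _ _ (fun x => dot (qfield z1 Q1 Q2 x) (perp (qgrad W (psub x z1))))).
  - apply tri_int_rule; [exact Hcr |]. intros s t.
    unfold newton_tri3, choose3, choose2, ref_map, qfield, qeval, qgrad, perp, dot, psub, padd,
      pscal.
    simpl. field.
  - intro x. rewrite Hq, (nabla_perp_quadratic w W z1 Hw). reflexivity.
Qed.

Lemma mean_sum_zero :
  tri_int z1 z2 z3 (fun x => fst (q x)) = 0 -> tri_int z1 z2 z3 (fun x => snd (q x)) = 0 ->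
  mean_sum z1 z2 z3 Q1 Q2 = (0, 0).
Proof.
  intros H1 H2. unfold mean_sum. f_equal.
  - apply (triangle_sum_zero z1 z2 z3 (fun x => fst (qfield z1 Q1 Q2 x)) Hcr).
    + intros s t. unfold newton_tri3, choose3, choose2, ref_map, qfield, qeval, psub, padd, pscal.
      simpl. field.
    + rewrite <- H1. apply tri_int_ext. intro x. rewrite Hq. reflexivity.
  - apply (triangle_sum_zero z1 z2 z3 (fun x => snd (qfield z1 Q1 Q2 x)) Hcr).
    + intros s t. unfold newton_tri3, choose3, choose2, ref_map, qfield, qeval, psub, padd, pscal.
      simpl. field.
    + rewrite <- H2. apply tri_int_ext. intro x. rewrite Hq. reflexivity.
Qed.

Lemma edge_moment_zero (j k : nat) :
  (1 <= k <= 3)%nat -> (j <= 1)%nat ->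
  (forall v, is_P1_edge (estart z1 z2 z3 k) (eend z1 z2 z3 k) v ->
     edge_int (estart z1 z2 z3 k) (eend z1 z2 z3 k)
       (fun x => dot (q x) (nrm z1 z2 z3 k) * v x) = 0) ->
  edge_moment z1 z2 z3 Q1 Q2 j k = 0.
Proof.
  intros Hk Hj Hedge. unfold edge_moment.
  apply normal_moment_zero; [apply (ell_pos _ _ _ _ Hk Hcr) | exact Hj | |].
  - intros v Hv. rewrite <- (Hedge v Hv). unfold edge_int. f_equal. apply RInt_ext.
    intros t _. rewrite Hq, nrm_rot_cw. reflexivity.
  - intro t. destruct j as [|[|]]; [| | lia];
      unfold newton4, choose4, choose3, choose2, qfield, qeval, seg, dot, rot_cw, psub, padd, pscal;
      simpl; field.
Qed.

End Pi_moments.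

(* [5760 c l_k^3 B_k], where [Qk], [Qm], [Qp] stand for [l_k^2], [l_(k-1)^2], [l_(k+1)^2] and [c]
   for [2|T|]. *)
Definition bterm_numerator (Qk Qm Qp c : R) (D : pt) (Q1 Q2 : quadratic) : R :=
  let N := rot_cw D in
  let tr u x y := fst u * qhess Q1 x y + snd u * qhess Q2 x y in
  let M := 3 * Qk ^ 2 - 3 * (Qm - Qp) ^ 2 - 4 * Qk * (Qm + Qp) in
  c * (M * tr D D D + 4 * c * (Qm - Qp) * (tr D D N + tr D N D) - 4 * c ^ 2 * tr D N N
       - M * (tr N D N + tr N N D) - 4 * c * (Qm - Qp) * tr N N N)
  + 2 * (Qm - Qp) * (4 * Qk ^ 2 - (Qm - Qp) ^ 2 - 3 * Qk * (Qm + Qp)) * tr N D D.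

Lemma bterm_numerator_factor (D P : pt) (Q1 Q2 : quadratic) :
  bterm_numerator (dot D D) (dot P P) (dot (psub P D) (psub P D)) (cross D P) D Q1 Q2
  = 8 * bterm D P Q1 Q2 * dot D D ^ 2.
Proof.
  destruct D as [d1 d2], P as [p1 p2].
  unfold bterm_numerator, bterm, qhess, rot_cw, cross, dot, psub. simpl. ring.
Qed.

Lemma edge_int_const (a b : pt) (f : pt -> R) (c : R) :
  (forall x, f x = c) -> edge_int a b f = pnorm (psub b a) * c.
Proof.
  intro H. unfold edge_int. f_equal.
  rewrite (RInt_ext _ (fun _ => c)) by (intros; apply H).
  rewrite RInt_const. unfold scal. simpl. unfold mult. simpl. ring.
Qed.

Lemma rhs_term_eq (z1 z2 z3 : pt) (d : R) (p : pt -> pt) (w : pt -> R) (P1 P2 W : quadratic)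
  (k : nat) :
  (1 <= k <= 3)%nat -> 0 < cross (psub z2 z1) (psub z3 z1) -> 0 < d ->
  ell z1 z2 z3 1 * ell z1 z2 z3 2 * ell z1 z2 z3 3 = d * cross (psub z2 z1) (psub z3 z1) ->
  (forall x, fst (p x) = qeval P1 (psub x z1)) -> (forall x, snd (p x) = qeval P2 (psub x z1)) ->
  (forall x, w x = qeval W (psub x z1)) ->
  rhs_term z1 z2 z3 d p w k
  = bterm (edge_vec z1 z2 z3 k) (apex z1 z2 z3 k) P1 P2
    * qhess W (edge_vec z1 z2 z3 k) (edge_vec z1 z2 z3 k) / (720 * cross (psub z2 z1) (psub z3 z1)).
Proof.
  intros Hk Hcr Hd HL Hp1 Hp2 Hw.
  assert (Hl : 0 < ell z1 z2 z3 k) by exact (ell_pos _ _ _ _ Hk Hcr).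
  unfold rhs_term. erewrite edge_int_const.
  2:{ intro x. unfold Bop. cbv zeta.
      rewrite !(vdder2_quadratic p P1 P2 z1 Hp1 Hp2), (dder2_quadratic w W z1 Hw).
      reflexivity. }
  change (pnorm (psub (eend z1 z2 z3 k) (estart z1 z2 z3 k))) with (ell z1 z2 z3 k).
  transitivity (bterm_numerator (ell z1 z2 z3 k ^ 2) (ell z1 z2 z3 (k - 1) ^ 2)
                  (ell z1 z2 z3 (k + 1) ^ 2) (cross (psub z2 z1) (psub z3 z1))
                  (edge_vec z1 z2 z3 k) P1 P2
                * qhess W (edge_vec z1 z2 z3 k) (edge_vec z1 z2 z3 k)
                / (5760 * cross (psub z2 z1) (psub z3 z1) * (ell z1 z2 z3 k ^ 2) ^ 2)).
  - unfold mu1_21, mu2_21, mu2_12, mu2_22, mu1_11, mu1_12, mu1_22, mu2_11. rewrite HL.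
    unfold bterm_numerator, nrm, tang, qhess, rot_cw, dot, pscal. fold (edge_vec z1 z2 z3 k).
    simpl. field. repeat split; lra.
  - pose proof (cross_edge_apex z1 z2 z3 k Hk) as Hc.
    assert (HD : 0 < dot (edge_vec z1 z2 z3 k) (edge_vec z1 z2 z3 k))
      by (apply (dot_self_pos _ (apex z1 z2 z3 k)); rewrite Hc; exact Hcr).
    rewrite ell_sq, (ell_prev_sq _ _ _ _ Hk), (ell_next_sq _ _ _ _ Hk), <- Hc,
      bterm_numerator_factor, Hc.
    field. lra.
Qed.

Theorem lemma2p1
  (z1 z2 z3 : pt)
  (* z1, z2, z3 counterclockwise (nondegenerate triangle) *)
  (hccw : 0 < cross (psub z2 z1) (psub z3 z1))
  (* d = diameter of the circumscribed circle *)
  (d : R)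
  (hd : exists c : pt,
          pnorm (psub z2 c) = pnorm (psub z1 c) /\
          pnorm (psub z3 c) = pnorm (psub z1 c) /\
          d = 2 * pnorm (psub z1 c))
  (p2 : pt -> pt)
  (hp2 : is_P2 (fun x => fst (p2 x)) /\ is_P2 (fun x => snd (p2 x)))
  (w2 : pt -> R) (hw2 : is_P2 w2)
  (* Pi = Pi_h^1 p2 *)
  (Pi : pt -> pt) (hPi : is_RT1 Pi)
  (hPi_edge : forall k : nat, (1 <= k <= 3)%nat ->
     forall v : pt -> R, is_P1_edge (estart z1 z2 z3 k) (eend z1 z2 z3 k) v ->
     edge_int (estart z1 z2 z3 k) (eend z1 z2 z3 k)
       (fun x => dot (psub (p2 x) (Pi x)) (nrm z1 z2 z3 k) * v x) = 0)
  (hPi_int1 : tri_int z1 z2 z3 (fun x => fst (psub (p2 x) (Pi x))) = 0)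
  (hPi_int2 : tri_int z1 z2 z3 (fun x => snd (psub (p2 x) (Pi x))) = 0) :
  tri_int z1 z2 z3 (fun x => dot (psub (p2 x) (Pi x)) (nabla_perp w2 x))
  = rhs_term z1 z2 z3 d p2 w2 1 + rhs_term z1 z2 z3 d p2 w2 2
    + rhs_term z1 z2 z3 d p2 w2 3.
Proof.
  destruct (ell_prod_circumdiameter z1 z2 z3 d hccw hd) as [HL Hd].
  destruct hp2 as [[P1 HP1]%(P2_quadratic _ z1) [P2 HP2]%(P2_quadratic _ z1)].
  destruct (P2_quadratic _ z1 hw2) as [W HW].
  destruct (RT1_quadratic _ z1 hPi) as (A1 & A2 & HA & HPi').
  assert (Hq : forall x, psub (p2 x) (Pi x) = qfield z1 (qsub P1 A1) (qsub P2 A2) x).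
  { intro x. rewrite HPi'. unfold qfield, psub at 1. rewrite HP1, HP2.
    unfold qsub, qeval. simpl. f_equal; ring. }
  pose proof (curl_sum_decomposition z1 z2 z3 (qsub P1 A1) (qsub P2 A2) W) as Hdec.
  cbv zeta in Hdec.
  rewrite (mean_sum_zero _ _ _ _ _ _ hccw Hq hPi_int1 hPi_int2) in Hdec.
  unfold sum3 in Hdec. rewrite !bterm_rt1 in Hdec by exact HA.
  assert (Hm : forall j k, (j <= 1)%nat -> (1 <= k <= 3)%nat ->
                          edge_moment z1 z2 z3 (qsub P1 A1) (qsub P2 A2) j k = 0)
    by (intros j k Hj Hk; exact (edge_moment_zero _ _ _ _ _ _ hccw Hq j k Hk Hj (hPi_edge k Hk))).
  rewrite !Hm in Hdec by lia.
  rewrite (tri_int_curl _ _ _ _ _ W _ w2 hccw Hq HW).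
  rewrite !(rhs_term_eq _ _ _ d p2 w2 P1 P2 W) by (auto; lia).
  unfold dot in Hdec. simpl in Hdec.
  apply (Rmult_eq_reg_r (720 * cross (psub z2 z1) (psub z3 z1))); [| lra].
  field_simplify; [| lra ..]. lra.
Qed.
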